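(* Assume the standing setting of the context. Let $(x,y)\in\Lambda$ with $y>0$ and let $a\in W(x,y)$. Then \[ \Big[\frac{x-1}{y},\,a\Big]\cap A\subseteq W(x,y). \]
   Context: Setting. Let $\Lambda\subset\mathbb{R}^2$ be the (discrete) set of holonomy vectors of saddle connections of a Veech translation surface, normalized at a cusp of its Veech group as in Kumanduri–Sanchez–Wang. Distinguished vector. $(x_0,y_0)\in\Lambda$ is the vector with $y_0>0$ the smallest positive $y$-component in $\Lambda$, and $x_0>0$ the smallest positive $x$-component among vectors of $\Lambda$ with $y$-component $y_0$. Cusp parameters. $\alpha>0$ is the cusp parameter and $n\in\{1,2\}$. Transversal. \[ \Omega=\{(a,b): 0<b\le1,\ \tfrac{x_0}{y_0}b-\tfrac1{y_0}\le a<(\tfrac{x_0}{y_0}+n\alpha)b-\tfrac1{y_0}\}. \] Its top edge is $A=[\tfrac{x_0-1}{y_0},\tfrac{x_0-1}{y_0}+n\alpha)\subset\mathbb{R}$, identified with $\Omega\cap\{b=1\}$ via $a\mapsto(a,1)$. Winners. A vector $(x,y)\in\Lambda$ is a candidate winning vector at $(a,b)$ if $y>0$ and $0<bx-ay\le1$. The winner at $(a,b)\in\Omega$ is the candidate with the largest $x/y$ (least slope), with ties broken by choosing the shortest. Winning sets. For $(x,y)\in\Lambda$ with $y>0$, $W(x,y)=\{a\in A: (x,y)\text{ is the winner at }(a,1)\}$. Standing fact: every point of $A$ has a winner. *)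

From Stdlib Require Import Reals Lra List.
Open Scope R_scope.

Definition pointset := R -> R -> Prop.

(* Discreteness (closed discrete, as for holonomy sets of saddle connections):
   every closed ball around the origin contains finitely many points of L. *)
Definition discrete_set (L : pointset) : Prop :=
  forall M : R, exists l : list (R * R),
    forall x y, L x y -> x * x + y * y <= M -> In (x, y) l.

Definition distinguished (L : pointset) (x0 y0 : R) : Prop :=
  L x0 y0 /\ 0 < y0 /\ 0 < x0 /\
  (forall x y, L x y -> 0 < y -> y0 <= y) /\
  (forall x, L x y0 -> 0 < x -> x0 <= x).

Definition Omega (x0 y0 alpha : R) (n : nat) (a b : R) : Prop :=
  0 < b <= 1 /\
  (x0 / y0) * b - 1 / y0 <= a /\
  a < (x0 / y0 + INR n * alpha) * b - 1 / y0.

Definition topA (x0 y0 alpha : R) (n : nat) (a : R) : Prop :=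
  (x0 - 1) / y0 <= a < (x0 - 1) / y0 + INR n * alpha.

Definition candidate (L : pointset) (a b x y : R) : Prop :=
  L x y /\ 0 < y /\ 0 < b * x - a * y <= 1.

Definition winner (L : pointset) (a b x y : R) : Prop :=
  candidate L a b x y /\
  forall u v, candidate L a b u v ->
    u / v < x / y \/ (u / v = x / y /\ x * x + y * y <= u * u + v * v).

Definition W (L : pointset) (x0 y0 alpha : R) (n : nat) (x y : R) (a : R) : Prop :=
  topA x0 y0 alpha n a /\ winner L a 1 x y.

From Stdlib Require Import Reals Lra.
Open Scope R_scope.

(* At height b, (u,v) is a candidate exactly on the interval of parameters
   (b u - 1)/v <= a < b u / v.  Lowering a inside this interval keeps (x,y) a
   candidate and can only remove competitors of larger x/y, which were already
   candidates at the original parameter and lost to (x,y) there. *)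

Lemma cross_le_of_div_le (x y u v : R) :
  0 < y -> 0 < v -> x / y <= u / v -> x * v <= u * y.
Proof.
  intros Hy Hv Hle.
  apply (Rmult_le_compat_r (y * v)) in Hle; [|nra].
  replace (x / y * (y * v)) with (x * v) in Hle by (field; lra).
  replace (u / v * (y * v)) with (u * y) in Hle by (field; lra).
  exact Hle.
Qed.

Lemma le_mul_of_div_le (a c y : R) : 0 < y -> c / y <= a -> c <= a * y.
Proof.
  intros Hy H.
  apply (Rmult_le_compat_r y) in H; [|lra].
  now replace (c / y * y) with c in H by (field; lra).
Qed.

Lemma candidate_param_le (L : pointset) (a a' b x y : R) :
  candidate L a b x y -> (b * x - 1) / y <= a' <= a -> candidate L a' b x y.
Proof.
  intros [Hxy [Hy [Hpos Hle1]]] [Hlo Hhi].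
  apply (le_mul_of_div_le _ _ _ Hy) in Hlo.
  assert (a' * y <= a * y) by (apply Rmult_le_compat_r; lra).
  repeat split; try assumption; lra.
Qed.

Lemma candidate_steeper_param_ge (L : pointset) (a a' b x y u v : R) :
  0 <= b -> candidate L a b x y -> candidate L a' b u v ->
  a' <= a -> x / y <= u / v -> candidate L a b u v.
Proof.
  intros Hb [_ [Hy [Hpos _]]] [Luv [Hv [_ Hle1]]] Ha'a Hslope.
  apply cross_le_of_div_le in Hslope; [|exact Hy|exact Hv].
  assert (Hfar : a * v < b * u).
  { apply (Rmult_lt_reg_r y); [exact Hy|].
    assert (a * y * v < b * x * v) by (apply Rmult_lt_compat_r; lra).
    assert (b * (x * v) <= b * (u * y)) by (apply Rmult_le_compat_l; lra).
    nra. }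
  assert (a' * v <= a * v) by (apply Rmult_le_compat_r; lra).
  repeat split; try assumption; lra.
Qed.

Lemma winner_param_le (L : pointset) (a a' b x y : R) :
  0 <= b -> winner L a b x y -> (b * x - 1) / y <= a' <= a -> winner L a' b x y.
Proof.
  intros Hb [Hcand Hbest] Ha'.
  split; [exact (candidate_param_le L a a' b x y Hcand Ha')|].
  intros u v Huv.
  destruct (Rlt_or_le (u / v) (x / y)) as [Hlt|Hge]; [now left|].
  apply Hbest.
  exact (candidate_steeper_param_ge L a a' b x y u v Hb Hcand Huv (proj2 Ha') Hge).
Qed.

Theorem mainTheorem5
  (L : pointset) (x0 y0 alpha : R) (n : nat)
  (HL : discrete_set L)
  (Hdist : distinguished L x0 y0)
  (Halpha : 0 < alpha)
  (Hn : n = 1%nat \/ n = 2%nat)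
  (Hwin : forall a, topA x0 y0 alpha n a -> exists u v, winner L a 1 u v)
  (x y : R) (Hxy : L x y) (Hy : 0 < y)
  (a : R) (Ha : W L x0 y0 alpha n x y a) :
  forall a', (x - 1) / y <= a' <= a -> topA x0 y0 alpha n a' ->
    W L x0 y0 alpha n x y a'.
Proof.
  intros a' Ha' HA'.
  split; [exact HA'|].
  apply (winner_param_le L a a' 1 x y); [lra|exact (proj2 Ha)|].
  now rewrite Rmult_1_l.
Qed.
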